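(* Let $m$ be odd and let $n\in\mathbf{N}$. Let $\lambda$ be a partition of $mn$ and let $f:S^\lambda\to H^{(m^n)}$ be a homomorphism of $\mathbf{Z}S_{mn}$-modules. Let $t=t_\lambda$. Then there exist set families $\mathcal{P}_1,\dots,\mathcal{P}_k$ of shape $(m^n)$ and type $\lambda$ and integers $a_1,\dots,a_k$ such that $e_t f=a_1u_1b_t+\cdots+a_ku_kb_t$, where $u_i$ is the indexed set partition associated to $\mathcal{P}_i$.
   Context: A set family of shape $(m^n)$ is a collection of $n$ distinct $m$-subsets of $\mathbf{N}$; it has type $\lambda$ (largest part $a$, conjugate $\lambda'$) if for each $i\in\{1,\dots,a\}$ exactly $\lambda'_i$ of its sets contain $i$. Let $A(\lambda)=\{i_j:1\le i\le a,\ 1\le j\le\lambda'_i\}$ and identify $S_{mn}$ with $\mathrm{Sym}(A(\lambda))$, acting on the right. $H^{(m^n)}$ is the permutation $\mathbf{Z}S_{mn}$-module with basis the set partitions of $A(\lambda)$ into $n$ sets each of size $m$. $t_\lambda$ is the $\lambda$-tableau whose $i$-th column is $i_1,\dots,i_{\lambda'_i}$ top to bottom; $C(t)$ is the column stabilizer, $b_t=\sum_{\tau\in C(t)}\mathrm{sgn}(\tau)\tau$, $e_t=\{t\}b_t$ the polytabloid, and $S^\lambda$ the Specht module (span of polytabloids in the Young permutation module $M^\lambda$). The indexed set partition associated to a set family $\mathcal{P}=\{X_1<\dots<X_n\}$ (lexicographic order) of type $\lambda$ is obtained by giving each element of $X_1$ index $1$ and each $i\in X_r$ the smallest index not already appended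 to an $i$ in $X_1,\dots,X_{r-1}$. *)

From HB Require Import structures.
From mathcomp Require Import all_boot all_order all_algebra all_fingroup.
From mathcomp Require Import finmap.

Set Implicit Arguments.
Unset Strict Implicit.
Unset Printing Implicit Defensive.

Import GRing.Theory.

Definition is_partition (lam : seq nat) (N : nat) : bool :=
  [&& sorted geq lam, 0 \notin lam & sumn lam == N].

Definition largest (lam : seq nat) : nat := \max_(x <- lam) x.

Definition conjp (lam : seq nat) (i : nat) : nat := count (fun x => i <= x) lam.

(* length of row r (rows numbered from 1) *)
Definition rowlen (lam : seq nat) (r : nat) : nat :=
  if r is r'.+1 then nth 0 lam r' else 0.

Definition Bnd (lam : seq nat) : nat := (sumn lam).+1.

(* the pair (i, j) stands for the symbol i_j :  1 <= i <= a,  1 <= j <= lam'_i *)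
Definition inA (lam : seq nat) (p : 'I_(Bnd lam) * 'I_(Bnd lam)) : bool :=
  (1 <= p.1 <= largest lam) && (1 <= p.2 <= conjp lam p.1).

Definition Aset (lam : seq nat) := {p : 'I_(Bnd lam) * 'I_(Bnd lam) | inA p}.

(* i_j lies in column i and row j of t_lam *)
Definition colA (lam : seq nat) (x : Aset lam) : nat := (val x).1.
Definition rowA (lam : seq nat) (x : Aset lam) : 'I_(Bnd lam) := (val x).2.

(* S_{mn} = Sym(A(lam)), acting on the right: x . g = g x ;
   in mathcomp (g * h) x = h (g x), so this is a right action. *)

(* A lam-tableau with entries A(lam) is a bijection from the boxes of the
   Young diagram to A(lam); identifying the box (row j, column i) with i_j
   (i.e. with the entry of t_lam in that box), a tableau is a permutation
   sigma of A(lam): the box of i_j holds sigma(i_j).  t_lam = 1. *)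

(* a tabloid is recorded by the row in which each entry lies *)
Definition is_tabloid (lam : seq nat) (T : {ffun Aset lam -> 'I_(Bnd lam)}) : bool :=
  [forall r : 'I_(Bnd lam), #|[set x | T x == r]| == rowlen lam r].

Definition tabloid (lam : seq nat) := {T : {ffun Aset lam -> 'I_(Bnd lam)} | is_tabloid T}.

(* {t} g = {t g}: entry x.g lies in the row where x lay *)
Definition tab_act (lam : seq nat) (T : tabloid lam) (g : {perm Aset lam}) : tabloid lam :=
  insubd T [ffun x => val T ((g^-1)%g x)].

Definition Mmod (lam : seq nat) := {ffun tabloid lam -> int}.

Definition act_M (lam : seq nat) (v : Mmod lam) (g : {perm Aset lam}) : Mmod lam :=
  [ffun T => v (tab_act T (g^-1)%g)].

(* row function of the tabloid {sigma} of the tableau sigma *)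
Definition tabrow (lam : seq nat) (s : {perm Aset lam}) : {ffun Aset lam -> 'I_(Bnd lam)} :=
  [ffun x => rowA ((s^-1)%g x)].

Definition colstab (lam : seq nat) (s : {perm Aset lam}) : {set {perm Aset lam}} :=
  [set tau : {perm Aset lam} |
     [forall x, colA ((s^-1)%g (tau x)) == colA ((s^-1)%g x)]].

Definition sgn (lam : seq nat) (tau : {perm Aset lam}) : int := (-1) ^+ odd_perm tau.

(* polytabloid e_sigma = {sigma} b_sigma = sum_{tau in C(sigma)} sgn(tau) {sigma} tau *)
Definition polytab (lam : seq nat) (s : {perm Aset lam}) : Mmod lam :=
  [ffun T : tabloid lam => \sum_(tau in colstab s)
      sgn tau * (nat_of_bool (val T == [ffun x => tabrow s ((tau^-1)%g x)]))%:R]%R.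

Definition in_specht (lam : seq nat) (v : Mmod lam) : Prop :=
  exists (k : nat) (c : 'I_k -> int) (s : 'I_k -> {perm Aset lam}),
    v = (\sum_(i < k) polytab (s i) *~ c i)%R.

Definition is_setpart (m n : nat) (lam : seq nat) (P : {set {set Aset lam}}) : bool :=
  [&& partition P [set: Aset lam], #|P| == n & [forall B in P, #|B| == m]].

Definition setpart (m n : nat) (lam : seq nat) := {P : {set {set Aset lam}} | is_setpart m n P}.

Definition sp_act (m n : nat) (lam : seq nat) (P : setpart m n lam) (g : {perm Aset lam})
  : setpart m n lam :=
  insubd P [set [set g x | x in B] | B : {set Aset lam} in val P].

Definition Hmod (m n : nat) (lam : seq nat) := {ffun setpart m n lam -> int}.

Definition act_H (m n : nat) (lam : seq nat) (v : Hmod m n lam) (g : {perm Aset lam})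
  : Hmod m n lam :=
  [ffun P => v (sp_act P (g^-1)%g)].

Definition delta (m n : nat) (lam : seq nat) (Q : {set {set Aset lam}}) : Hmod m n lam :=
  [ffun P : setpart m n lam => (nat_of_bool (val P == Q))%:R]%R.

Definition bt_H (m n : nat) (lam : seq nat) (v : Hmod m n lam) : Hmod m n lam :=
  (\sum_(tau in colstab (1%g : {perm Aset lam})) act_H v tau *~ sgn tau)%R.

Definition is_hom (m n : nat) (lam : seq nat) (f : Mmod lam -> Hmod m n lam) : Prop :=
  (forall v w, in_specht v -> in_specht w -> f (v + w)%R = (f v + f w)%R) /\
  (forall v g, in_specht v -> f (act_M v g) = act_H (f v) g).

Local Open Scope fset_scope.

Definition family_of (m n : nat) (lam : seq nat) (P : {fset {fset nat}}) : Prop :=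
  [/\ #|` P| = n,
      (forall X, X \in P -> #|` X| = m) &
      (forall i, 1 <= i <= largest lam -> #|` [fset X in P | i \in X]| = conjp lam i)].

Fixpoint lexle (s t : seq nat) : bool :=
  match s, t with
  | [::], _ => true
  | _ :: _, [::] => false
  | x :: s', y :: t' => (x < y) || ((x == y) && lexle s' t')
  end.

Definition setkey (X : {fset nat}) : seq nat := sort leq X.

Definition sorted_family (P : {fset {fset nat}}) : seq {fset nat} :=
  sort (fun X Y => lexle (setkey X) (setkey Y)) P.

(* the index attached to i in X_r is the smallest index not already attached
   to an i in X_1, ..., X_{r-1}, i.e. #{ s <= r | i \in X_s } *)
Definition indexed_blocks (P : {fset {fset nat}}) : seq (seq (nat * nat)) :=
  let Xs := sorted_family P in
  [seq [seq (i, count (fun Y : {fset nat} => i \in Y) (take r.+1 Xs))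
         | i <- (nth fset0 Xs r : seq nat)] | r <- iota 0 (size Xs)].

Definition indexed_sp (lam : seq nat) (P : {fset {fset nat}}) : {set {set Aset lam}} :=
  \bigcup_(B <- indexed_blocks P)
     [set [set x : Aset lam | ((val x).1 : nat, (val x).2 : nat) \in B]].

From HB Require Import structures.
From mathcomp Require Import all_boot all_order all_algebra all_fingroup.
From mathcomp Require Import finmap zify.

(* Write v for e_t f.  Since e_t s = sgn(s) e_t for s in the column group C(t), v is
   alternating under C(t), so its coefficient at a set partition P vanishes whenever an
   odd element of C(t) fixes P.  Such an element exists unless each block of P meets
   every column at most once and distinct blocks meet distinct sets of columns: a
   transposition inside a block, or, m being odd, the product of the m column-preserving
   transpositions exchanging two blocks with the same columns.  For the remaining P the
   C(t)-orbit contains exactly one indexed set partition u, with trivial stabiliser, so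
   v is the sum of the v(u) u b_t over these u. *)

Set Implicit Arguments.
Unset Strict Implicit.
Unset Printing Implicit Defensive.

Import GRing.Theory.

Section CountTake.
Variables (T : Type) (x0 : T) (p : pred T).

Lemma count_take_mono (s : seq T) k k' : k <= k' ->
  count p (take k s) <= count p (take k' s).
Proof. by move=> /subnKC <-; rewrite takeD count_cat leq_addr. Qed.

Lemma count_take_le (s : seq T) k : count p (take k s) <= count p s.
Proof. by rewrite -{2}(cat_take_drop k s) count_cat leq_addr. Qed.

Lemma count_takeS (s : seq T) r : r < size s ->
  count p (take r.+1 s) = count p (take r s) + p (nth x0 s r).
Proof. by move=> hr; rewrite (take_nth x0 hr) -cats1 count_cat /= addn0. Qed.

Lemma count_takeS_inj (s : seq T) r1 r2 : r1 < size s -> r2 < size s ->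
  p (nth x0 s r1) -> p (nth x0 s r2) ->
  count p (take r1.+1 s) = count p (take r2.+1 s) -> r1 = r2.
Proof.
have lt_count r r' : r < r' -> r' < size s -> p (nth x0 s r') ->
    count p (take r.+1 s) < count p (take r'.+1 s).
  by move=> lt_rr' hr' pr'; rewrite (count_takeS hr') pr' addn1 ltnS count_take_mono.
move=> h1 h2 p1 p2 e; case: (ltngtP r1 r2) => // lt.
  by have := lt_count _ _ lt h2 p2; rewrite e ltnn.
by have := lt_count _ _ lt h1 p1; rewrite e ltnn.
Qed.

End CountTake.

Section SwapAlong.
Variables (T : finType) (g : T -> T).

Definition swap_along (l : seq T) : {perm T} := (\prod_(z <- l) tperm z (g z))%g.

Lemma swap_alongE l : uniq l -> {in l &, injective g} -> {in l, forall z, g z \notin l} ->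
  [/\ {in l, forall z, swap_along l z = g z},
      {in l, forall z, swap_along l (g z) = z} &
      forall w, w \notin l -> w \notin map g l -> swap_along l w = w].
Proof.
elim: l => [|z l IH] /=.
  by move=> _ _ _; split => // w _ _; rewrite /swap_along big_nil perm1.
move=> /andP[zl ul] ig dg; rewrite /swap_along big_cons -/(swap_along l).
have ig' : {in l &, injective g} by move=> a b ha hb; apply: ig; rewrite inE ?ha ?hb orbT.
have dg' : {in l, forall a, g a \notin l}.
  by move=> a ha; have := dg a; rewrite !inE ha orbT negb_or => /(_ isT) /andP[].
have [I1 I2 I3] := IH ul ig' dg'.
have := dg z; rewrite !inE eqxx negb_or => /(_ isT) /andP[gzz gzl].
have gzm : g z \notin map g l.
  apply/mapP => -[a ha /ig]; rewrite !inE ha eqxx orbT => /(_ isT isT) eza.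
  by rewrite eza ha in zl.
have zm : z \notin map g l.
  by apply/mapP => -[a ha eza]; have := dg a; rewrite !inE ha orbT -eza eqxx => /(_ isT).
split=> w; rewrite ?inE.
- case/orP=> [/eqP ->|hw]; rewrite permM; first by rewrite tpermL I3.
  by rewrite tpermD ?I1 //; apply/eqP => e; [rewrite e hw in zl | rewrite e hw in gzl].
- case/orP=> [/eqP ->|hw]; rewrite permM; first by rewrite tpermR I3.
  rewrite tpermD ?I2 //; apply/eqP => e.
    by have := dg w; rewrite !inE hw orbT -e eqxx => /(_ isT).
  by have := ig z w; rewrite !inE eqxx hw orbT => /(_ isT isT e) ezw; rewrite ezw hw in zl.
- move=> /norP[wz wl] /norP[wgz wm].
  by rewrite permM tpermD ?I3 // eq_sym.
Qed.

Lemma odd_swap_along l : {in l, forall z, g z \notin l} -> odd_perm (swap_along l) = odd (size l).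
Proof.
move=> dg; rewrite /swap_along -(size_map (fun z => (z, g z))).
rewrite -odd_perm_prod ?big_map //; apply/allP => _ /mapP[z hz ->] /=.
by apply: contraNneq (dg z hz) => <-.
Qed.

End SwapAlong.

Lemma setact_id (aT : finGroupType) (D : {set aT}) (rT : finType) (to : action D rT)
    (S : {set rT}) a :
  {in S, forall x, to x a \in S} -> to^* S a = S.
Proof.
move=> h; apply/eqP; rewrite eqEcard card_setact leqnn andbT.
by apply/subsetP => _ /imsetP[x hx ->]; exact: h.
Qed.

Lemma mem_bigcup_set1 (T : eqType) (aT : finType) (f : T -> {set aT}) (s : seq T) S :
  (S \in \bigcup_(x <- s) [set f x]) = (S \in map f s).
Proof. by elim: s => [|x s IH]; rewrite ?big_nil ?in_set0 // big_cons in_setU in_set1 IH inE. Qed.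

Section Columns.
Variable lam : seq nat.
Local Notation A := (Aset lam).
Local Notation C := (colstab (1%g : {perm A})).

Lemma colstab_group_set (s : {perm A}) : group_set (colstab s).
Proof.
apply/group_setP; split=> [|t u]; rewrite !inE; first by apply/forallP => x; rewrite perm1.
move=> /forallP ht /forallP hu; apply/forallP => x.
by rewrite permM (eqP (hu _)) (eqP (ht _)).
Qed.

Canonical colstab_group (s : {perm A}) := group (colstab_group_set s).

Lemma colstab1P (t : {perm A}) : reflect (forall x, colA (t x) = colA x) (t \in C).
Proof.
rewrite inE invg1; apply: (iffP forallP) => h x; first by have /eqP := h x; rewrite !perm1.
by rewrite !perm1 h.
Qed.

Lemma tperm_colstab1 x y : colA x = colA y -> tperm x y \in C.
Proof. by move=> e; apply/colstab1P => z; case: tpermP => // ->. Qed.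

Lemma Aset_eq (x y : A) : colA x = colA y -> (rowA x : nat) = rowA y -> x = y.
Proof.
case: x y => [[a b] ?] [[c d] ?]; rewrite /colA /rowA /= => e1 e2.
by apply/val_inj/pair_equal_spec; split; apply: val_inj.
Qed.

Lemma largest_le_sumn : largest lam <= sumn lam.
Proof.
rewrite /largest; elim: lam => [|a l IH]; first by rewrite big_nil.
by rewrite big_cons /= geq_max leq_addr (leq_trans IH) ?leq_addl.
Qed.

Hypothesis lam0 : 0 \notin lam.

Lemma conjp_le_sumn i : conjp lam i <= sumn lam.
Proof.
apply: leq_trans (count_size _ _) _; move: lam0.
elim: lam => [//|a l IH]; rewrite inE negb_or => /andP[a0 /IH] /=.
by move: a0; rewrite eq_sym -lt0n; lia.
Qed.

Lemma ltn_Bnd_largest i : i <= largest lam -> i < Bnd lam.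
Proof. by move/leq_trans/(_ largest_le_sumn). Qed.

Lemma ltn_Bnd_conjp i j : j <= conjp lam i -> j < Bnd lam.
Proof. by move/leq_trans/(_ (conjp_le_sumn i)). Qed.

Lemma inA_inord i j : 1 <= i <= largest lam -> 1 <= j <= conjp lam i ->
  inA (inord i : 'I_(Bnd lam), inord j : 'I_(Bnd lam)).
Proof.
move=> /[dup] hi /andP[_ /ltn_Bnd_largest ei] /[dup] hj /andP[_ /ltn_Bnd_conjp ej].
by rewrite /inA /= !inordK // hi.
Qed.

Lemma insubd_inordE i j (x0 : A) : 1 <= i <= largest lam -> 1 <= j <= conjp lam i ->
  colA (insubd x0 (inord i, inord j)) = i /\ (rowA (insubd x0 (inord i, inord j)) : nat) = j.
Proof.
move=> /[dup] hi /andP[_ /ltn_Bnd_largest ei] /[dup] hj /andP[_ /ltn_Bnd_conjp ej].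
rewrite /colA /rowA insubdK /= -?topredE /= ?inA_inord //.
by split; apply: inordK.
Qed.

Lemma Aset_bounds (x : A) :
  1 <= colA x <= largest lam /\ 1 <= rowA x <= conjp lam (colA x).
Proof. by have /andP[] := valP x. Qed.

Lemma card_col i : 1 <= i <= largest lam -> #|[set x : A | colA x == i]| = conjp lam i.
Proof.
move=> hi; set S := [set x : A | colA x == i].
have row_inj : {in enum S &, injective (fun x => rowA x : nat)}.
  move=> x y; rewrite !mem_enum !inE => /eqP hx /eqP hy e.
  by apply: Aset_eq; rewrite ?hx ?hy.
suff /perm_size : perm_eq [seq rowA x : nat | x <- enum S] (iota 1 (conjp lam i)).
  by rewrite size_map size_iota cardE.
apply: uniq_perm; rewrite ?iota_uniq ?map_inj_in_uniq ?enum_uniq // => j.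
rewrite mem_iota; apply/mapP/idP => [[x]|hj].
  rewrite mem_enum inE => /eqP hx ->; have [_] := Aset_bounds x; rewrite hx; lia.
have hj' : 1 <= j <= conjp lam i by lia.
have [cx rx] := insubd_inordE (Sub _ (inA_inord hi hj')) hi hj'.
by exists (insubd (Sub _ (inA_inord hi hj')) (inord i, inord j)); rewrite ?mem_enum ?inE ?cx.
Qed.

Local Notation act_set := ('P^*)%act.
Local Notation act_sp := ('P^*^*)%act.

Definition colset (B : {set A}) : {fset nat} := [fset i in map (@colA lam) (enum B)]%fset.

Definition col_family (P : {set {set A}}) : {fset {fset nat}} :=
  [fset X in map colset (enum P)]%fset.

Lemma colsetP i (B : {set A}) : reflect (exists2 x, x \in B & colA x = i) (i \in colset B).
Proof.
rewrite in_fset /=; apply: (iffP mapP) => [[x]|[x hx <-]]; last by exists x; rewrite ?mem_enum.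
by rewrite mem_enum => hx ->; exists x.
Qed.

Lemma col_familyP X (P : {set {set A}}) :
  reflect (exists2 B, B \in P & X = colset B) (X \in col_family P).
Proof.
rewrite in_fset /=; apply: (iffP mapP) => [[B]|[B hB ->]]; last by exists B; rewrite ?mem_enum.
by rewrite mem_enum => hB ->; exists B.
Qed.

Lemma colset_act t (B : {set A}) : t \in C -> colset (act_set B t) = colset B.
Proof.
move=> /colstab1P ht; apply/fsetP => i.
apply/colsetP/colsetP => [[_ /imsetP[x hx ->] <-]|[x hx <-]].
  by exists x; rewrite ?ht.
by exists (t x); rewrite ?ht ?imset_f.
Qed.

Lemma col_family_act t (P : {set {set A}}) : t \in C -> col_family (act_sp P t) = col_family P.
Proof.
move=> ht; apply/fsetP => X; apply/col_familyP/col_familyP => [[_ /imsetP[B hB ->] ->]|[B hB ->]].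
  by exists B; rewrite ?colset_act.
by exists (act_set B t); [apply: imset_f | exact/esym/colset_act].
Qed.

(* The set partitions that are read off from set families of shape (m^n). *)
Definition col_faithful (P : {set {set A}}) : bool :=
  [forall B in P, forall x in B, forall y in B, (colA x == colA y) ==> (x == y)] &&
  [forall B in P, forall B' in P, (colset B == colset B') ==> (B == B')].

Lemma col_faithfulP (P : {set {set A}}) :
  reflect ({in P, forall B : {set A}, {in B &, injective (@colA lam)}} /\
           {in P &, injective colset})
          (col_faithful P).
Proof.
apply: (iffP andP) => [[/forall_inP h1 /forall_inP h2]|[h1 h2]]; split.
- move=> B /h1/forall_inP hB x y /hB/forall_inP hx /hx/implyP h /eqP/h; exact/eqP.
- move=> B B' /h2/forall_inP hB /hB/implyP h /eqP/h; exact/eqP.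
- apply/forall_inP => B /h1 hB; apply/forall_inP => x hx; apply/forall_inP => y hy.
  by apply/implyP => /eqP/hB-> //.
- apply/forall_inP => B hB; apply/forall_inP => B' hB'.
  by apply/implyP => /eqP/h2-> //.
Qed.

Lemma col_faithful_act t (P : {set {set A}}) :
  t \in C -> col_faithful (act_sp P t) = col_faithful P.
Proof.
suff imp s Q : s \in C -> col_faithful Q -> col_faithful (act_sp Q s).
  move=> ht; apply/idP/idP; last exact: imp.
  by move/(imp _ _ (groupVr ht)); rewrite -actM mulgV act1.
move=> hs /col_faithfulP[h1 h2]; apply/col_faithfulP; split.
  move=> _ /imsetP[B hB ->] _ _ /imsetP[x hx ->] /imsetP[y hy ->].
  by move/colstab1P: hs => hs; rewrite /= !hs => /(h1 B hB x y hx hy) ->.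
move=> _ _ /imsetP[B1 h1B ->] /imsetP[B2 h2B ->].
by rewrite !colset_act // => /(h2 B1 B2 h1B h2B) ->.
Qed.

Lemma exists_col_matching (B B' : {set A}) :
  {in B' &, injective (@colA lam)} -> colset B = colset B' ->
  exists g : A -> A, {in B, forall z, g z \in B' /\ colA (g z) = colA z} /\
                     {in B', forall w, exists2 z, z \in B & w = g z}.
Proof.
move=> injB' eBB'; pose g z := odflt z [pick y in B' | colA y == colA z].
have gP z : z \in B -> g z \in B' /\ colA (g z) = colA z.
  move=> hz; rewrite /g; case: pickP => [y /andP[hy /eqP]|none] //=.
  have : colA z \in colset B' by rewrite -eBB'; apply/colsetP; exists z.
  by case/colsetP => y hy hcy; have := none y; rewrite hy hcy eqxx.
exists g; split=> // w hw.
have : colA w \in colset B by rewrite eBB'; apply/colsetP; exists w.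
case/colsetP => z hz hcz; exists z => //; have [gz cgz] := gP z hz.
by apply: injB'; rewrite // cgz.
Qed.

Lemma exists_col_swap (B B' : {set A}) : [disjoint B & B'] ->
  {in B &, injective (@colA lam)} -> {in B' &, injective (@colA lam)} -> colset B = colset B' ->
  exists s, [/\ s \in C, odd_perm s = odd #|B|, act_set B s = B', act_set B' s = B &
               {in ~: (B :|: B'), forall x, s x = x}].
Proof.
move=> dis injB injB' eBB'; have [g [gP g_onto]] := exists_col_matching injB' eBB'.
have ig : {in enum B &, injective g}.
  move=> a b; rewrite !mem_enum => ha hb e; apply: injB => //.
  by have [_ <-] := gP a ha; have [_ <-] := gP b hb; rewrite e.
have dg : {in enum B, forall z, g z \notin enum B}.
  by move=> z; rewrite !mem_enum => /gP[/(disjointFl dis) ->].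
have [gE gK gfix] := swap_alongE (enum_uniq (mem B)) ig dg.
set s := swap_along g (enum B).
have sB z : z \in B -> s z = g z by rewrite -mem_enum => /gE.
have sB' w : w \in B' -> exists2 z, z \in B & s w = z /\ w = g z.
  by case/g_onto => z hz ->; exists z; rewrite ?gK ?mem_enum.
have sfix : {in ~: (B :|: B'), forall x, s x = x}.
  move=> x; rewrite !inE negb_or => /andP[xB xB']; apply: gfix; first by rewrite mem_enum.
  by apply: contra xB' => /mapP[z]; rewrite mem_enum => /gP[? _] ->.
exists s; split=> //.
- apply/colstab1P => z; have [hz|zB] := boolP (z \in B).
    by rewrite sB //; case: (gP z hz).
  have [/sB'[w hw [-> ->]]|zB'] := boolP (z \in B'); first by case: (gP w hw).
  by rewrite sfix // !inE negb_or zB.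
- by rewrite odd_swap_along // -cardE.
- apply/setP => w; apply/imsetP/idP => [[z hz ->]|hw].
    by rewrite /= apermE sB //; case: (gP z hz).
  by case: (g_onto w hw) => z hz ->; exists z; rewrite //= apermE sB.
- apply/setP => z; apply/imsetP/idP => [[w hw ->]|hz].
    by rewrite /= apermE; case: (sB' w hw) => z' hz' [-> _].
  by exists (g z); [case: (gP z hz) | rewrite /= apermE gK ?mem_enum].
Qed.

Section SetPartitions.
Variables m n : nat.
Local Notation Sp := (setpart m n lam).

Lemma is_setpart_act (P : {set {set A}}) g : is_setpart m n P -> is_setpart m n (act_sp P g).
Proof.
case/and3P=> hp hn hm; apply/and3P; split.
- have <- : act_set [set: A] g = [set: A].
    by apply/eqP; rewrite eqEcard subsetT card_setact cardsT /=.
  by rewrite imset_partition //; exact: perm_inj.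
- by rewrite card_setact.
- by apply/forall_inP => _ /imsetP[B hB ->]; rewrite card_setact (forall_inP hm).
Qed.

Lemma sp_act_val (Q : Sp) g : val (sp_act Q g) = act_sp (val Q) g.
Proof. by rewrite /sp_act insubdK // -topredE /= is_setpart_act ?(valP Q). Qed.

Lemma sp_partition (Q : Sp) : partition (val Q) [set: A].
Proof. by case/and3P: (valP Q). Qed.

Lemma card_sp (Q : Sp) : #|val Q| = n.
Proof. by case/and3P: (valP Q) => _ /eqP. Qed.

Lemma card_sp_block (Q : Sp) B : B \in val Q -> #|B| = m.
Proof. by case/and3P: (valP Q) => _ _ /forall_inP h /h/eqP. Qed.

Lemma pblock_sp (Q : Sp) x : pblock (val Q) x \in val Q.
Proof. by apply: pblock_mem; rewrite (cover_partition (sp_partition Q)) inE. Qed.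

Lemma mem_pblock_sp (Q : Sp) x : x \in pblock (val Q) x.
Proof. by rewrite mem_pblock (cover_partition (sp_partition Q)) inE. Qed.

Lemma pblock_spE (Q : Sp) B x : B \in val Q -> x \in B -> pblock (val Q) x = B.
Proof. by apply: def_pblock; case/and3P: (sp_partition Q). Qed.

Lemma mem_sp_block (Q : Sp) B x : B \in val Q -> (x \in B) = (pblock (val Q) x == B).
Proof.
by move=> hB; apply/idP/eqP => [|<-]; [exact: pblock_spE | exact: mem_pblock_sp].
Qed.

Lemma col_faithful_stab1 (Q : Sp) t :
  col_faithful (val Q) -> t \in C -> act_sp (val Q) t = val Q -> t = 1%g.
Proof.
move=> /col_faithfulP[h1 h2] ht he; apply/permP => x; rewrite perm1.
set B := pblock (val Q) x; have hB : B \in val Q := pblock_sp Q x.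
have hBt : act_set B t \in val Q by rewrite -he; apply: imset_f.
have eB : act_set B t = B by apply: h2; rewrite ?colset_act.
apply: (h1 B) => //; last by move/colstab1P: ht.
  by rewrite -eB; apply: imset_f; exact: mem_pblock_sp.
exact: mem_pblock_sp.
Qed.

Lemma tperm_sp_stab (Q : Sp) B x y : B \in val Q -> x \in B -> y \in B ->
  act_sp (val Q) (tperm x y) = val Q.
Proof.
move=> hB hx hy; apply: setact_id => D hD.
suff -> : act_set D (tperm x y) = D by [].
apply: setact_id => z; rewrite /= apermE !(mem_sp_block _ hD).
by case: (tpermP x y z) => [->|->|//]; rewrite (pblock_spE hB hx) (pblock_spE hB hy).
Qed.

Lemma swap_blocks_sp_stab (Q : Sp) B B' : odd m ->
  {in val Q, forall D : {set A}, {in D &, injective (@colA lam)}} ->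
  B \in val Q -> B' \in val Q -> B != B' -> colset B = colset B' ->
  exists s, [/\ s \in C, odd_perm s & act_sp (val Q) s = val Q].
Proof.
move=> om inj hB hB' nBB' eBB'.
have dis : [disjoint B & B'] by case/and3P: (sp_partition Q) => _ /trivIsetP/(_ B B' hB hB' nBB').
have [s [hs odd_s sB sB' sfix]] := exists_col_swap dis (inj B hB) (inj B' hB') eBB'.
exists s; split => //; first by rewrite odd_s (@card_sp_block Q _ hB).
apply: setact_id => D hD; have [->|nDB] := eqVneq D B; first by rewrite sB.
have [->|nDB'] := eqVneq D B'; first by rewrite sB'.
suff -> : act_set D s = D by [].
apply: setact_id => w hw; rewrite /= apermE sfix // !inE negb_or.
by rewrite (mem_sp_block _ hB) (mem_sp_block _ hB') (pblock_spE hD hw) nDB.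
Qed.

Lemma count_col_blocks (Q : Sp) i : col_faithful (val Q) ->
  count (fun B => i \in colset B) (enum (val Q)) = #|[set x : A | colA x == i]|.
Proof.
move=> /col_faithfulP[inj _]; rewrite -size_filter cardE -(size_map (pblock (val Q))).
apply/perm_size/uniq_perm; first by rewrite filter_uniq ?enum_uniq.
  rewrite map_inj_in_uniq ?enum_uniq // => x y; rewrite !mem_enum !inE => /eqP hx /eqP hy e.
  apply: (inj (pblock (val Q) x)); rewrite ?pblock_sp ?mem_pblock_sp ?hx ?hy //.
  by rewrite e mem_pblock_sp.
move=> B; rewrite mem_filter mem_enum; apply/andP/mapP => [[/colsetP[x hx <-] hB]|[x]].
  by exists x; rewrite ?(pblock_spE hB hx) // mem_enum inE.
rewrite mem_enum inE => /eqP <- ->; split; last exact: pblock_sp.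
by apply/colsetP; exists x; rewrite ?mem_pblock_sp.
Qed.

Lemma perm_col_family (Q : Sp) : col_faithful (val Q) ->
  perm_eq (col_family (val Q)) (map colset (enum (val Q))).
Proof.
move=> /col_faithfulP[_ inj]; apply: uniq_perm; rewrite ?fset_uniq //.
  by rewrite map_inj_in_uniq ?enum_uniq // => B B'; rewrite !mem_enum; exact: inj.
by move=> X; rewrite in_fset.
Qed.

Lemma family_of_col_family (Q : Sp) :
  col_faithful (val Q) -> family_of m n lam (col_family (val Q)).
Proof.
move=> /[dup] faith /col_faithfulP[inj1 inj2]; split.
- transitivity #|val Q|; last exact: card_sp.
  rewrite cardE -(size_map colset); exact/perm_size/perm_col_family.
- move=> _ /col_familyP[B hB ->]; rewrite card_fseq undup_id ?size_map -?cardE.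
    exact: card_sp_block hB.
  by rewrite map_inj_in_uniq ?enum_uniq // => x y; rewrite !mem_enum; exact: inj1.
move=> i hi; rewrite -card_col // -(count_col_blocks i faith).
rewrite -[count _ _](count_map colset (fun X => i \in X)).
rewrite -(seq.permP (perm_col_family faith)) -size_filter.
rewrite -(undup_id (filter_uniq _ (fset_uniq _))) -card_fseq.
by congr #|` _|; apply/fsetP => X; rewrite !in_fset /= mem_filter andbC.
Qed.

Section CanonicalForm.
Variable Q : Sp.
Hypothesis faith : col_faithful (val Q).

Let fam := sorted_family (col_family (val Q)).

Let col_index i r := count (fun Y : {fset nat} => i \in Y) (take r.+1 fam).

Let block_rank x := index (colset (pblock (val Q) x)) fam.

Let indexed_block r : {set A} :=
  [set x : A | ((val x).1 : nat, (val x).2 : nat) \in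
                 [seq (i, col_index i r) | i <- nth fset0 fam r]].

Lemma uniq_fam : uniq fam.
Proof. by rewrite sort_uniq fset_uniq. Qed.

Lemma mem_fam X : (X \in fam) = (X \in col_family (val Q)).
Proof. by rewrite mem_sort. Qed.

Lemma colset_pblock_fam x : colset (pblock (val Q) x) \in fam.
Proof. by rewrite mem_fam; apply/col_familyP; exists (pblock (val Q) x); rewrite ?pblock_sp. Qed.

Lemma block_rank_lt x : block_rank x < size fam.
Proof. by rewrite index_mem colset_pblock_fam. Qed.

Lemma col_mem_block_rank x : colA x \in nth fset0 fam (block_rank x).
Proof.
by rewrite nth_index ?colset_pblock_fam //; apply/colsetP; exists x; rewrite ?mem_pblock_sp.
Qed.

Lemma col_index_bounds x : 1 <= col_index (colA x) (block_rank x) <= conjp lam (colA x).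
Proof.
have [hc _] := Aset_bounds x; apply/andP; split.
  by rewrite /col_index (count_takeS fset0 _ (block_rank_lt x)) col_mem_block_rank addn1.
apply: leq_trans (count_take_le _ _ _) _; rewrite -card_col //.
rewrite -(count_col_blocks _ faith) (seq.permP (permEl (perm_sort _ _))).
by rewrite (seq.permP (perm_col_family faith)) count_map.
Qed.

Let canon (x : A) : A := insubd x (inord (colA x), inord (col_index (colA x) (block_rank x))).

Lemma canonE x :
  colA (canon x) = colA x /\ (rowA (canon x) : nat) = col_index (colA x) (block_rank x).
Proof. by apply: insubd_inordE; [case: (Aset_bounds x) | exact: col_index_bounds]. Qed.

Lemma canon_inj : injective canon.
Proof.
move: faith => /col_faithfulP[inj1 inj2] x y e.
have [cx rx] := canonE x; have [cy ry] := canonE y.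
have exy : colA x = colA y by rewrite -cx -cy e.
have rank_xy : block_rank x = block_rank y.
  apply: (count_takeS_inj (x0 := fset0) (p := fun Y => colA x \in Y)
                          (block_rank_lt x) (block_rank_lt y)).
  - exact: col_mem_block_rank.
  - by rewrite exy col_mem_block_rank.
  by rewrite -/(col_index _ _) -rx e ry exy.
have hb : pblock (val Q) x = pblock (val Q) y.
  apply: inj2; rewrite ?pblock_sp // -(nth_index fset0 (colset_pblock_fam x)).
  by rewrite -(nth_index fset0 (colset_pblock_fam y)) -/(block_rank x) -/(block_rank y) rank_xy.
by apply: (inj1 (pblock (val Q) x)); rewrite ?pblock_sp ?mem_pblock_sp // hb mem_pblock_sp.
Qed.

Definition canon_perm : {perm A} := perm canon_inj.

Lemma canon_perm_colstab : canon_perm \in C.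
Proof. by apply/colstab1P => x; rewrite permE; case: (canonE x). Qed.

Lemma mem_indexed_block r x :
  (x \in indexed_block r) = (colA x \in nth fset0 fam r) && (rowA x == col_index (colA x) r :> nat).
Proof.
rewrite inE; apply/mapP/andP => [[i hi [e1 e2]]|[hi /eqP hr]].
  by rewrite /colA /rowA e1 e2 hi eqxx.
by exists (colA x); rewrite // -hr.
Qed.

Lemma indexed_spP S :
  reflect (exists2 r, r < size fam & S = indexed_block r)
          (S \in indexed_sp lam (col_family (val Q))).
Proof.
rewrite /indexed_sp /indexed_blocks mem_bigcup_set1 -map_comp.
apply: (iffP mapP) => [[r]|[r hr ->]]; last by exists r; rewrite ?mem_iota.
by rewrite mem_iota => hr ->; exists r.
Qed.

Lemma act_set_canon B : B \in val Q -> act_set B canon_perm = indexed_block (index (colset B) fam).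
Proof.
move=> hB; move: faith => /col_faithfulP[inj1 _].
have hBfam : colset B \in fam by rewrite mem_fam; apply/col_familyP; exists B.
apply/setP => y; rewrite mem_indexed_block nth_index //; apply/imsetP/andP.
  case=> x hx ->; rewrite /= apermE permE; have [-> ->] := canonE x.
  by rewrite /block_rank (pblock_spE hB hx); split; [apply/colsetP; exists x|].
case=> /colsetP[x hx hcx] /eqP hry; exists x => //; rewrite /= apermE permE.
have [cx rx] := canonE x; apply: Aset_eq; first by rewrite cx.
by rewrite rx hry /block_rank (pblock_spE hB hx) hcx.
Qed.

Lemma act_sp_canon : act_sp (val Q) canon_perm = indexed_sp lam (col_family (val Q)).
Proof.
apply/setP => S; apply/imsetP/indexed_spP => [[B hB ->]|[r hr ->]].
  exists (index (colset B) fam); last exact: act_set_canon.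
  by rewrite index_mem mem_fam; apply/col_familyP; exists B.
have : nth fset0 fam r \in col_family (val Q) by rewrite -mem_fam mem_nth.
case/col_familyP => B hB e; exists B => //.
by rewrite act_set_canon // -e index_uniq // uniq_fam.
Qed.

End CanonicalForm.

Lemma exists_canonical_act (Q : Sp) : col_faithful (val Q) ->
  exists2 t, t \in C & val (sp_act Q t) = indexed_sp lam (col_family (val Q)).
Proof.
by move=> faith; exists (canon_perm faith); rewrite ?canon_perm_colstab // sp_act_val act_sp_canon.
Qed.

Local Open Scope ring_scope.

Definition alternating (w : Hmod m n lam) : Prop :=
  forall s, s \in C -> act_H w s = w *~ sgn s.

Lemma alternating_sp_act w (P : Sp) s : alternating w -> s \in C -> w (sp_act P s) = w P *~ sgn s.
Proof.
move=> alt hs; have := congr1 (fun v : Hmod m n lam => v P) (alt _ (groupVr hs)).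
by rewrite /= ffunE ffunMzE invgK /sgn odd_permV.
Qed.

Lemma alternating_odd_stab w (P : Sp) s : alternating w -> s \in C -> odd_perm s ->
  act_sp (val P) s = val P -> w P = 0.
Proof.
move=> alt hs odd_s fixP; have := alternating_sp_act P alt hs.
have -> : sp_act P s = P by apply: val_inj; rewrite sp_act_val.
by rewrite /sgn odd_s expr1 mulrN1z; lia.
Qed.

Lemma alternating_col_faithful w (P : Sp) : odd m -> alternating w -> w P != 0 ->
  col_faithful (val P).
Proof.
move=> om alt nz; have inj1 : {in val P, forall B : {set A}, {in B &, injective (@colA lam)}}.
  move=> B hB x y hx hy hc; apply/eqP; apply: contraNT nz => nxy; apply/eqP.
  apply: (alternating_odd_stab alt (tperm_colstab1 hc)); first by rewrite odd_tperm.
  exact: tperm_sp_stab hB hx hy.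
apply/col_faithfulP; split => // B B' hB hB' hc; apply/eqP; apply: contraNT nz => nBB'.
have [s [hs odd_s fixP]] := swap_blocks_sp_stab om inj1 hB hB' nBB' hc.
by rewrite (alternating_odd_stab alt hs odd_s fixP).
Qed.

Lemma bt_H_deltaE q (P : Sp) :
  bt_H (delta m n q) P = \sum_(t in C) (val (sp_act P t^-1%g) == q)%:R *~ sgn t.
Proof. by rewrite sum_ffunE; apply: eq_bigr => t _; rewrite ffunMzE !ffunE. Qed.

Lemma bt_H_delta_eq0 q (P : Sp) :
  {in C, forall t, val (sp_act P t) != q} -> bt_H (delta m n q) P = 0.
Proof.
move=> off; rewrite bt_H_deltaE big1 // => t ht.
by rewrite (negPf (off _ (groupVr ht))) mul0rz.
Qed.

Lemma bt_H_delta_sp_act (P : Sp) t : col_faithful (val P) -> t \in C ->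
  bt_H (delta m n (val (sp_act P t))) P = sgn t.
Proof.
move=> faith ht; rewrite bt_H_deltaE (bigD1 t^-1%g) ?groupV //= invgK eqxx mulr1n intz.
rewrite /sgn odd_permV big1 ?addr0 // => u /andP[hu nut].
case: eqP => [/val_inj e|]; last by rewrite mul0rz.
case/eqP: nut; rewrite -[u]invgK; congr (_^-1)%g; apply/eqP; rewrite eq_mulgV1.
apply/eqP/(col_faithful_stab1 (Q := P)) => //; first by rewrite groupM ?groupV.
by rewrite actM -sp_act_val e sp_act_val -actM mulgV act1.
Qed.

Definition canonical_sps : seq Sp :=
  [seq U <- enum {: Sp} | col_faithful (val U) && (val U == indexed_sp lam (col_family (val U)))].

Lemma mem_canonical_sps U :
  (U \in canonical_sps) = col_faithful (val U) && (val U == indexed_sp lam (col_family (val U))).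
Proof. by rewrite mem_filter mem_enum andbT. Qed.

Lemma alternating_expansion w : odd m -> alternating w ->
  w = \sum_(U <- canonical_sps) bt_H (delta m n (val U)) *~ w U.
Proof.
move=> om alt; apply/ffunP => P; rewrite sum_ffunE.
under eq_bigr do rewrite ffunMzE.
have [faith|unfaith] := boolP (col_faithful (val P)); last first.
  have -> : w P = 0 by apply/eqP; apply: contraNT unfaith; exact: alternating_col_faithful.
  rewrite big1_seq // => U /andP[_]; rewrite mem_canonical_sps => /andP[faithU _].
  rewrite bt_H_delta_eq0 ?mul0rz // => t ht; apply: contraNneq unfaith => e.
  by rewrite -(col_faithful_act _ ht) -sp_act_val e.
have [t ht canonP] := exists_canonical_act faith.
have canon_mem : sp_act P t \in canonical_sps.
  rewrite mem_canonical_sps sp_act_val col_faithful_act // col_family_act //.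
  by rewrite -sp_act_val canonP eqxx faith.
rewrite (bigD1_seq _ canon_mem (filter_uniq _ (enum_uniq _))) /= big1_seq; last first.
  move=> U /andP[nU]; rewrite mem_canonical_sps => /andP[_ /eqP canonU].
  rewrite bt_H_delta_eq0 ?mul0rz // => u hu; apply: contraNneq nU => /val_inj e.
  apply/eqP/val_inj; rewrite canonU canonP -e sp_act_val col_family_act //.
rewrite addr0 bt_H_delta_sp_act // alternating_sp_act // !mulrzz.
by rewrite mulrCA -expr2 /sgn sqrr_sign mulr1.
Qed.

End SetPartitions.

Lemma tab_act_invE (T : tabloid lam) (g : {perm A}) :
  val (tab_act T g^-1) = [ffun x => val T (g x)].
Proof.
rewrite /tab_act invgK insubdK // -topredE /=; apply/forallP => r.
rewrite -(eqP (forallP (valP T) r)); apply/eqP.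
by rewrite -[RHS](card_preimset _ (@perm_inj _ g)); apply: eq_card => x; rewrite !inE ffunE.
Qed.

Lemma polytab1_colstab s : s \in C ->
  act_M (polytab (1%g : {perm A})) s = (polytab (1%g : {perm A}) *~ sgn s)%R.
Proof.
move=> hs; apply/ffunP => T; rewrite ffunMzE !ffunE tab_act_invE.
rewrite (reindex_inj (mulIg s^-1%g)) /= -mulrzr mulr_suml; apply: eq_big => [t|t ht].
  by rewrite groupMr ?groupV.
rewrite intz /sgn odd_permM odd_permV signr_addb -!mulrA; congr (_ * _)%R.
rewrite mulrC; congr (_ * _)%R; congr ((nat_of_bool _)%:R)%R.
apply/eqP/eqP => [e|->]; apply/ffunP => y; rewrite /tabrow !ffunE !invg1 !perm1.
  move/ffunP/(_ (s^-1 y)%g): e; rewrite !ffunE invg1 perm1 permKV => ->.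
  by rewrite invMg invgK permM permKV.
by rewrite invMg invgK permM.
Qed.

Lemma in_specht_polytab (s : {perm A}) : in_specht (polytab s).
Proof. by exists 1%N, (fun _ => 1%R), (fun _ => s); rewrite big_ord1 mulr1z. Qed.

Lemma hom_opp m n (f : Mmod lam -> Hmod m n lam) v :
  is_hom f -> in_specht v -> f (- v)%R = (- f v)%R.
Proof.
case=> hadd _ [k [c [s ->]]].
have spN : in_specht (- \sum_(i < k) polytab (s i) *~ c i)%R.
  by exists k, (fun i => - c i)%R, s; rewrite -sumrN; apply: eq_bigr => i _; rewrite mulrNz.
have sp0 : in_specht (0%R : Mmod lam).
  by exists 0%N, (fun _ => 0%R), (fun _ => 1%g); rewrite big_ord0.
have f0 : f 0%R = 0%R by apply: (addrI (f 0%R)); rewrite -hadd ?addr0.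
apply: (addrI (f (\sum_(i < k) polytab (s i) *~ c i)%R)).
by rewrite -hadd ?subrr //; exists k, c, s.
Qed.

Lemma hom_alternating m n (f : Mmod lam -> Hmod m n lam) :
  is_hom f -> alternating (f (polytab (1%g : {perm A}))).
Proof.
move=> hom s hs; rewrite -(proj2 hom _ _ (in_specht_polytab _)) polytab1_colstab // /sgn.
by case: (odd_perm s); rewrite ?expr1 ?expr0 ?mulrN1z ?mulr1z ?(hom_opp hom (in_specht_polytab _)).
Qed.

End Columns.

Theorem proposition4p2 (m n : nat) (lam : seq nat) (f : Mmod lam -> Hmod m n lam) :
  odd m -> is_partition lam (m * n) -> is_hom f ->
  exists (k : nat) (Ps : 'I_k -> {fset {fset nat}}) (a : 'I_k -> int),
    (forall i, family_of m n lam (Ps i)) /\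
    f (polytab (1%g : {perm Aset lam})) =
      (\sum_(i < k) bt_H (delta m n (indexed_sp lam (Ps i))) *~ a i)%R.
Proof.
move=> om /and3P[_ lam0 _] hom.
set L := canonical_sps lam m n; set w := f _.
exists (size L), (fun i => col_family (val (tnth (in_tuple L) i))),
  (fun i => w (tnth (in_tuple L) i)).
split=> [i|].
  apply: (family_of_col_family lam0).
  by have := mem_tnth i (in_tuple L); rewrite mem_canonical_sps => /andP[].
rewrite [LHS](alternating_expansion lam0 om (hom_alternating hom)) big_tnth.
apply: eq_bigr => i _; have := mem_tnth i (in_tuple L).
by rewrite mem_canonical_sps => /andP[_ /eqP canon]; rewrite -canon.
Qed.
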